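(* Let $A,B$ be the Dickson matrices of $q$-polynomials $f,g\in\mathbb{F}_{q^n}[x]$ and suppose $A$ and $B$ are diagonally similar. Then there is $\lambda\in\mathbb{F}_{q^n}^*$ with $B=\mathrm{diag}(\lambda,\lambda^q,\dots,\lambda^{q^{n-1}})^{-1}A\,\mathrm{diag}(\lambda,\lambda^q,\dots,\lambda^{q^{n-1}})$, and then $g(x)=\lambda^{-1}f(\lambda x)$. Moreover, if $\mathbb{F}_{q'}$ ($\mathbb{F}_q\subseteq\mathbb{F}_{q'}\subseteq\mathbb{F}_{q^n}$) is the maximum field of linearity of $f$ (equivalently of $g$), then such a $\lambda$ is unique modulo $\mathbb{F}_{q'}^*$.
   Context: A $q$-polynomial is $f(x)=\sum_{j=0}^{n-1}a_jx^{q^j}\in\mathbb{F}_{q^n}[x]$; its Dickson matrix is the $n\times n$ matrix indexed by $\mathbb{Z}_n$ with $A[i|j]=a_{j-i}^{q^i}$. Two $n\times n$ matrices $A,B$ are diagonally similar if $B=D^{-1}AD$ for an invertible diagonal matrix $D$. The maximum field of linearity of $f$ is the largest subfield $\mathbb{F}_{q^e}$ ($e\mid n$) such that $f$ is $\mathbb{F}_{q^e}$-linear. *)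

From HB Require Import structures.
From mathcomp Require Import all_boot all_order all_algebra all_field.
Set Implicit Arguments. Unset Strict Implicit. Unset Printing Implicit Defensive.
Import GRing.Theory.
Local Open Scope ring_scope.

(* A q-polynomial f(x) = \sum_{j<n} a_j x^{q^j} over L = F_{q^n} is given by
   its coefficient vector a : 'I_n -> L. *)

Definition qcoef (L : fieldType) (n : nat) (a : 'I_n -> L) (k : nat) : L :=
  if insub (k %% n)%N is Some i then a i else 0.

Definition qpoly_eval (L : fieldType) (q n : nat) (a : 'I_n -> L) (x : L) : L :=
  \sum_(j < n) a j * x ^+ (q ^ j).

(* Dickson matrix: A[i|j] = a_{j-i}^{q^i}, indices in Z_n *)
Definition dickson (L : fieldType) (q n : nat) (a : 'I_n -> L) : 'M[L]_n :=
  \matrix_(i < n, j < n) (qcoef a ((j + n - i) %% n)) ^+ (q ^ i).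

Definition diag_similar (L : fieldType) (n : nat) (A B : 'M[L]_n) : Prop :=
  exists D : 'M[L]_n, [/\ is_diag_mx D, D \in unitmx & B = invmx D *m A *m D].

Definition qdiag (L : fieldType) (q n : nat) (lam : L) : 'M[L]_n :=
  diag_mx (\row_(i < n) lam ^+ (q ^ i)).

Definition in_Fqe (L : fieldType) (q e : nat) (c : L) : bool :=
  c ^+ (q ^ e) == c.

(* f : L -> L is F_{q^e}-linear (additivity is automatic for q-polynomials,
   but we state it anyway) *)
Definition Fqe_linear (L : fieldType) (q e : nat) (f : L -> L) : Prop :=
  (forall x y, f (x + y) = f x + f y) /\
  (forall c x, in_Fqe q e c -> f (c * x) = c * f x).

Definition max_field_linearity (L : fieldType) (q n e : nat) (f : L -> L) : Prop :=
  [/\ (e %| n)%N, Fqe_linear q e f &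
      forall e', (e' %| n)%N -> Fqe_linear q e' f -> (e' %| e)%N].

From HB Require Import structures.
From mathcomp Require Import all_boot all_order all_algebra all_field.
From mathcomp Require Import cyclic zify ring.
From Stdlib Require Import ClassicalEpsilon.
Set Implicit Arguments. Unset Strict Implicit. Unset Printing Implicit Defensive.
Import GRing.Theory.
Local Open Scope ring_scope.

(* Write B = D^-1 A D with D = diag(d_0, ..., d_{n-1}).  Comparing the entry
   (0, s) with the entry (i, i + s) shows that phi(m) = d_m / d_0 satisfies the
   cocycle rule phi(i + s) = phi(i) phi(s)^(q^i) for every s with a_s <> 0.  The
   indices s at which the rule holds for all i are closed under subtraction and
   contain n, so they are the multiples of some e | n; then
   phi(je) = x^(1 + q^e + ... + q^((j-1)e)) with x = phi(e), whose norm
   x^((q^n-1)/(q^e-1)) is phi(n) = 1.  Since L^* is cyclic, x = lam^(q^e-1)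
   (Hilbert 90), hence phi(s) = lam^(q^s-1) on the support of a, which is
   exactly lam b_j = a_j lam^(q^j).  Two such lam, mu differ by t = mu/lam with
   a_j t^(q^j) = a_j t, i.e. f(tx) = t f(x); since a q-polynomial of q-degree
   < n is determined by its values, this holds iff t lies in the maximum field
   of linearity of f. *)

Lemma subn_closed_generator (P : nat -> Prop) n : (0 < n)%N -> P n ->
    (forall a b, P a -> P b -> (b <= a)%N -> P (a - b)%N) ->
  exists e, [/\ P e, (e %| n)%N & forall m, P m -> (e %| m)%N].
Proof.
move=> n_gt0 Pn P_subn.
pose Pb m := if excluded_middle_informative (P m) then true else false.
have PbP m : Pb m <-> P m by rewrite /Pb; case: excluded_middle_informative.
have Pb_pos : exists m, (0 < m)%N && Pb m by exists n; rewrite n_gt0; apply/PbP.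
case: (ex_minnP Pb_pos) => e /andP[e_gt0 /PbP Pe] e_min.
have P_subnM m j : P m -> (j * e <= m)%N -> P (m - j * e)%N.
  move=> Pm; elim: j => [|j IHj] je_le; first by rewrite subn0.
  have -> : (m - j.+1 * e = m - j * e - e)%N by rewrite mulSn; lia.
  rewrite mulSn in je_le; apply: P_subn => //; [apply: IHj | ]; lia.
have e_dvd m : P m -> (e %| m)%N.
  move=> Pm; rewrite /dvdn; case: eqP => // /eqP r_neq0.
  suff : (e <= m %% e)%N by rewrite leqNgt ltn_pmod.
  apply: e_min; rewrite lt0n r_neq0; apply/PbP.
  have -> : (m %% e = m - m %/ e * e)%N by rewrite {2}(divn_eq m e); lia.
  by apply: P_subnM; rewrite ?leq_divM.
by exists e; split => //; apply: e_dvd.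
Qed.

Lemma expr_qexp_fixed_mul (L : fieldType) (q m : nat) (z : L) :
  z ^+ (q ^ m) = z -> forall k, z ^+ (q ^ (k * m)) = z.
Proof.
move=> zm; elim=> [|k IHk]; first by rewrite mul0n expn0 expr1.
by rewrite mulSn expnD exprM zm IHk.
Qed.

Lemma expr_qexp_mod (L : finFieldType) (q n : nat) (z : L) m :
  #|L| = (q ^ n)%N -> z ^+ (q ^ m) = z ^+ (q ^ (m %% n)).
Proof.
move=> cardL; rewrite {1}(divn_eq m n) expnD exprM expr_qexp_fixed_mul //.
by rewrite -cardL expf_card.
Qed.

(* Holds because the unit group of a finite field is cyclic of order #|L|.-1. *)
Lemma unity_root_is_power (L : finFieldType) (M N : nat) (x : L) :
  (M * N)%N = #|L|.-1 -> x != 0 -> x ^+ N = 1 -> exists2 y, y != 0 & y ^+ M = x.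
Proof.
move=> MN x_neq0 xN.
have cardL_gt1 := finNzRing_gt1 L.
have units_root (z : L) : z != 0 -> z ^+ #|L|.-1 = 1.
  move=> z_neq0; apply: (mulfI z_neq0).
  by rewrite mulr1 -exprS prednK ?expf_card // ltnW.
have /hasP[z] : has #|L|.-1.-primitive_root (enum (predC1 (0 : L))).
  apply: has_prim_root; last by rewrite -cardE cardC1.
  - by rewrite -ltnS prednK // ltnW.
  - by apply/allP => z; rewrite mem_enum unity_rootE => /units_root ->.
  - exact: enum_uniq.
rewrite mem_enum inE => z_neq0 z_prim.
have [i xE] := prim_rootP z_prim (units_root x x_neq0).
have N_gt0 : (0 < N)%N.
  rewrite lt0n; apply: contraTneq (cardL_gt1) => N0.
  by rewrite -[#|L|]prednK ?ltnS -?MN ?N0 ?muln0 //; apply: ltnW.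
have /dvdnP [k ik] : (M %| i)%N.
  by rewrite -(dvdn_pmul2r N_gt0) MN (prim_order_dvd z_prim) exprM -xE xN.
by exists (z ^+ k); rewrite ?expf_neq0 // -exprM -ik xE.
Qed.

Definition cocycle_at (L : fieldType) (q : nat) (phi : nat -> L) (m : nat) : Prop :=
  forall i, phi (i + m)%N = phi i * phi m ^+ (q ^ i).

Section Cocycle.

Variables (L : finFieldType) (q n : nat) (phi : nat -> L).
Hypotheses (q_gt0 : (0 < q)%N) (n_gt0 : (0 < n)%N) (cardL : #|L| = (q ^ n)%N).
Hypotheses (phi0 : phi 0 = 1) (phi_periodic : forall m, phi (m + n)%N = phi m).
Hypothesis phi_neq0 : forall m, phi m != 0.

Lemma cocycle_at_period : cocycle_at q phi n.
Proof. by move=> i; rewrite phi_periodic -[n]add0n phi_periodic phi0 expr1n mulr1. Qed.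

Lemma cocycle_at_subn a b :
  cocycle_at q phi a -> cocycle_at q phi b -> (b <= a)%N -> cocycle_at q phi (a - b).
Proof.
move=> Ca Cb /subnK; move: (a - b)%N => c ac i; rewrite -{}ac in Ca.
apply: (mulIf (expf_neq0 (q ^ (i + c)) (phi_neq0 b))).
by rewrite -Cb -addnA Ca Cb exprMn -exprM -expnD addnC mulrA.
Qed.

Lemma cocycle_coboundary :
  exists2 lam : L, lam != 0 & forall s, cocycle_at q phi s -> phi s * lam = lam ^+ (q ^ s).
Proof.
have [e [Ce e_dvdn e_min]] :=
  subn_closed_generator n_gt0 cocycle_at_period cocycle_at_subn.
pose s j := (\sum_(i < j) (q ^ e) ^ i)%N.
have phi_mul j : phi (j * e)%N = phi e ^+ s j.
  elim: j => [|j IHj]; first by rewrite phi0 /s big_ord0.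
  by rewrite mulSn addnC Ce IHj /s big_ord_recr /= exprD -expnM mulnC.
have s_pred j : ((q ^ e).-1 * s j)%N = (q ^ (j * e)).-1.
  by rewrite -predn_exp -expnM mulnC.
have n_e : (n %/ e * e = n)%N := divnK e_dvdn.
have [lam lam_neq0 lamE] : exists2 lam : L, lam != 0 & lam ^+ (q ^ e).-1 = phi e.
  apply: (@unity_root_is_power _ _ (s (n %/ e)%N) _ _ (phi_neq0 e)).
    by rewrite s_pred n_e cardL.
  by rewrite -phi_mul n_e -[n]add0n phi_periodic phi0.
exists lam => // t /e_min /dvdnP [k ->].
by rewrite phi_mul -lamE -exprM s_pred -exprSr prednK // expn_gt0 q_gt0.
Qed.

End Cocycle.

Section QCoef.

Variables (L : fieldType) (n : nat) (a : 'I_n -> L).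

Lemma qcoefE k (k_lt : (k %% n < n)%N) : qcoef a k = a (Ordinal k_lt).
Proof. by rewrite /qcoef insubT. Qed.

Lemma qcoef_ord (j : 'I_n) : qcoef a j = a j.
Proof.
have j_lt : (j %% n < n)%N by rewrite modn_small.
by rewrite (qcoefE j_lt); congr a; apply: val_inj; rewrite /= modn_small.
Qed.

Lemma qcoef_mod k : qcoef a (k %% n) = qcoef a k.
Proof. by rewrite /qcoef modn_mod. Qed.

End QCoef.

Lemma diag_conjE (L : fieldType) n (d : 'rV[L]_n) (A B : 'M[L]_n) :
    (forall i, d 0 i != 0) ->
  B = invmx (diag_mx d) *m A *m diag_mx d <-> forall i j, d 0 i * B i j = A i j * d 0 j.
Proof.
move=> d_neq0.
have d_unit : diag_mx d \in unitmx.
  by rewrite unitmxE det_diag unitfE; apply/prodf_neq0 => i _.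
have -> : (B = invmx (diag_mx d) *m A *m diag_mx d) <-> (diag_mx d *m B = A *m diag_mx d).
  split=> [->|dB]; first by rewrite !mulmxA mulmxV // mul1mx.
  by rewrite -mulmxA -dB mulKmx.
split=> [/matrixP dB i j | dB]; last first.
  by apply/matrixP => i j; rewrite mul_diag_mx mul_mx_diag !mxE.
by have := dB i j; rewrite mul_diag_mx mul_mx_diag !mxE.
Qed.

Section Dickson.

Variables (L : fieldType) (q n : nat) (a : 'I_n -> L).
Hypothesis n_gt0 : (0 < n)%N.

Lemma dickson_row0 j : dickson q a (Ordinal n_gt0) j = a j.
Proof. by rewrite mxE subn0 modnDr modn_small // qcoef_ord expr1. Qed.

Lemma dickson_shift i s :
  dickson q a (Ordinal (ltn_pmod i n_gt0)) (Ordinal (ltn_pmod (i + s) n_gt0)) =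
  qcoef a s ^+ (q ^ (i %% n)).
Proof.
rewrite mxE /= -(qcoef_mod a s); congr (qcoef a _ ^+ _); apply/eqP.
rewrite -(eqn_modDl (i %% n)) subnKC ?modnDr ?modn_mod ?modnDml //.
by rewrite (leq_trans (ltnW (ltn_pmod i n_gt0))) ?leq_addl.
Qed.

End Dickson.

Lemma dickson_qdiag_conjE (L : finFieldType) (q n : nat) (a b : 'I_n -> L) (lam : L) :
    (0 < n)%N -> #|L| = (q ^ n)%N -> lam != 0 ->
  dickson q b = invmx (qdiag q n lam) *m dickson q a *m qdiag q n lam <->
  forall j : 'I_n, lam * b j = a j * lam ^+ (q ^ j).
Proof.
move=> n_gt0 cardL lam_neq0; rewrite diag_conjE => [|i]; last by rewrite mxE expf_neq0.
split=> [conj j | qscale i j].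
  by have := conj (Ordinal n_gt0) j; rewrite !dickson_row0 !mxE expn0 expr1.
have k_lt : ((j + n - i) %% n %% n < n)%N by rewrite ltn_pmod.
have k_add : ((j + n - i) %% n %% n + i = j %[mod n])%N.
  by rewrite modn_mod modnDml subnK ?modnDr ?(leq_trans (ltnW (ltn_ord i))) ?leq_addl.
rewrite !mxE !(qcoefE _ k_lt).
have := congr1 (fun z => z ^+ (q ^ i)) (qscale (Ordinal k_lt)).
rewrite /= !exprMn -!exprM -expnD [X in _ = _ * X](expr_qexp_mod _ _ cardL) k_add.
by rewrite (modn_small (ltn_ord j)).
Qed.

Section DiagonalSimilarity.

Variables (L : finFieldType) (q n : nat) (a b : 'I_n -> L) (d : 'rV[L]_n).
Hypotheses (q_gt0 : (0 < q)%N) (n_gt0 : (0 < n)%N) (cardL : #|L| = (q ^ n)%N).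
Hypothesis d_neq0 : forall i, d 0 i != 0.
Hypothesis d_conj : forall i j, d 0 i * dickson q b i j = dickson q a i j * d 0 j.

Let dmod m := d 0 (Ordinal (ltn_pmod m n_gt0)).
Let phi m := dmod m / dmod 0.

Let dmod_ord (j : 'I_n) : dmod j = d 0 j.
Proof. by congr (d 0); apply: val_inj; rewrite /= modn_small. Qed.

Let dmod_neq0 m : dmod m != 0. Proof. exact: d_neq0. Qed.

Lemma dmod_row0 m : dmod 0 * qcoef b m = qcoef a m * dmod m.
Proof.
have := d_conj (Ordinal n_gt0) (Ordinal (ltn_pmod m n_gt0)).
by rewrite !dickson_row0 -(qcoefE a) -(qcoefE b) -(dmod_ord (Ordinal n_gt0)).
Qed.

Lemma phi_cocycle_at_support s : qcoef a s != 0 -> cocycle_at q phi s.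
Proof.
move=> as_neq0 i.
have := d_conj (Ordinal (ltn_pmod i n_gt0)) (Ordinal (ltn_pmod (i + s) n_gt0)).
rewrite !dickson_shift -/(dmod i) -/(dmod (i + s)) (expr_qexp_mod _ i cardL).
have phi_s : phi s = qcoef b s / qcoef a s.
  by apply/eqP; rewrite /phi eqr_div // mulrC -dmod_row0 mulrC.
rewrite phi_s expr_div_n; set AQ := qcoef a s ^+ _; set BQ := qcoef b s ^+ _.
have AQ_neq0 : AQ != 0 by rewrite expf_neq0.
move=> conj_i; rewrite /phi -[dmod (i + s)](mulKf AQ_neq0) -conj_i.
by field; rewrite AQ_neq0 dmod_neq0.
Qed.

Lemma dickson_conj_qscale :
  exists2 lam : L, lam != 0 & forall j : 'I_n, lam * b j = a j * lam ^+ (q ^ j).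
Proof.
have phi0 : phi 0 = 1 by rewrite /phi divff.
have phi_periodic m : phi (m + n)%N = phi m.
  by rewrite /phi /dmod; congr (d 0 _ / _); apply: val_inj; rewrite /= modnDr.
have phi_neq0 m : phi m != 0 by rewrite mulf_neq0 ?invr_eq0.
have [lam lam_neq0 lamE] :=
  cocycle_coboundary q_gt0 n_gt0 cardL phi0 phi_periodic phi_neq0.
exists lam => // j; have row := dmod_row0 j; rewrite !qcoef_ord dmod_ord in row.
have [aj0 | aj_neq0] := eqVneq (a j) 0.
  have bj0 : b j = 0 by apply: (mulfI (dmod_neq0 0)); rewrite row aj0 mul0r mulr0.
  by rewrite aj0 bj0 mulr0 mul0r.
have bjE : b j = a j * phi j.
  by rewrite /phi dmod_ord mulrA -row mulrC mulKf.
rewrite -(lamE j); first by rewrite bjE mulrCA [lam * _]mulrC.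
by apply: phi_cocycle_at_support; rewrite qcoef_ord.
Qed.

End DiagonalSimilarity.

Lemma diag_similar_dickson_qscale (L : finFieldType) (q n : nat) (a b : 'I_n -> L) :
    (0 < q)%N -> (0 < n)%N -> #|L| = (q ^ n)%N ->
    diag_similar (dickson q a) (dickson q b) ->
  exists2 lam : L, lam != 0 & forall j : 'I_n, lam * b j = a j * lam ^+ (q ^ j).
Proof.
move=> q_gt0 n_gt0 cardL [_ [/diag_mxP [d ->] d_unit /diag_conjE d_conj]].
have d_neq0 i : d 0 i != 0.
  by move: d_unit; rewrite unitmxE det_diag unitfE => /prodf_neq0; apply.
exact: dickson_conj_qscale q_gt0 n_gt0 cardL d_neq0 (d_conj d_neq0).
Qed.

Lemma qpoly_eval_eq0 (L : finFieldType) (q n : nat) (c : 'I_n -> L) :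
    (1 < q)%N -> #|L| = (q ^ n)%N ->
  (forall x, qpoly_eval q c x = 0) -> forall j, c j = 0.
Proof.
move=> q_gt1 cardL c0 j.
pose p : {poly L} := \sum_(i < n) c i *: 'X^(q ^ i).
have pE x : p.[x] = qpoly_eval q c x.
  by rewrite horner_sum; apply: eq_bigr => i _; rewrite hornerZ hornerXn.
have p0 : p = 0.
  apply: (@roots_geq_poly_eq0 _ p (enum L)); last 2 first.
  - exact: enum_uniq.
  - rewrite -cardE cardL (leq_trans (size_sum _ _ _)) //.
    apply/bigmax_leqP => i _; rewrite (leq_trans (size_scale_leq _ _)) //.
    by rewrite size_polyXn ltn_exp2l.
  by apply/allP => x _; rewrite /root pE c0.
have := congr1 (fun r : {poly L} => r`_(q ^ j)) p0.
rewrite /= coef0 coef_sum (bigD1 j) //= coefZ coefXn eqxx mulr1 big1 ?addr0 //.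
move=> i ij; rewrite coefZ coefXn eqn_exp2l // (inj_eq val_inj) eq_sym (negPf ij).
by rewrite mulr0.
Qed.

Lemma qpoly_eval_homogeneousP (L : finFieldType) (q n : nat) (a : 'I_n -> L) (t : L) :
    (1 < q)%N -> #|L| = (q ^ n)%N ->
  (forall x, qpoly_eval q a (t * x) = t * qpoly_eval q a x) <->
  (forall j, a j * t ^+ (q ^ j) = a j * t).
Proof.
move=> q_gt1 cardL; split=> [homt j | fixt x]; last first.
  rewrite /qpoly_eval mulr_sumr; apply: eq_bigr => j _.
  by rewrite exprMn mulrA fixt mulrCA mulrA.
apply/eqP; rewrite -subr_eq0 -mulrBr; apply/eqP.
apply: (@qpoly_eval_eq0 _ q n (fun j => a j * (t ^+ (q ^ j) - t))) => // x.
transitivity (qpoly_eval q a (t * x) - t * qpoly_eval q a x); last by rewrite homt subrr.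
rewrite /qpoly_eval mulr_sumr -sumrB.
by apply: eq_bigr => i _; rewrite exprMn; ring.
Qed.

Lemma qpoly_eval_qscale (L : fieldType) (q n : nat) (a b : 'I_n -> L) (lam : L) :
    lam != 0 -> (forall j, lam * b j = a j * lam ^+ (q ^ j)) ->
  forall x, qpoly_eval q b x = lam^-1 * qpoly_eval q a (lam * x).
Proof.
move=> lam_neq0 qscale x; rewrite /qpoly_eval mulr_sumr; apply: eq_bigr => j _.
by rewrite exprMn [a j * _]mulrA -qscale -mulrA mulKf.
Qed.

Lemma Fqe_linear_conj (L : fieldType) (q e : nat) (f g : L -> L) (lam : L) :
    (forall x, g x = lam^-1 * f (lam * x)) ->
  Fqe_linear q e f -> Fqe_linear q e g.
Proof.
move=> gE [f_add f_lin]; split=> [x y | c x c_in]; rewrite !gE.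
  by rewrite mulrDr f_add mulrDr.
by rewrite (mulrCA lam c x) (f_lin c) // mulrCA.
Qed.

Lemma Fqe_linear_conjE (L : fieldType) (q e : nat) (f g : L -> L) (lam : L) :
    lam != 0 -> (forall x, g x = lam^-1 * f (lam * x)) ->
  Fqe_linear q e f <-> Fqe_linear q e g.
Proof.
move=> lam_neq0 gE; split; first exact: Fqe_linear_conj.
apply: (@Fqe_linear_conj _ _ _ g f lam^-1) => x.
by rewrite gE invrK !mulVKf.
Qed.

Lemma max_field_linearity_ext (L : fieldType) (q n e : nat) (f g : L -> L) :
    (forall e', Fqe_linear q e' f <-> Fqe_linear q e' g) ->
  max_field_linearity q n e f <-> max_field_linearity q n e g.
Proof.
move=> fg; split=> -[e_dvdn lin max_e]; split=> // [|e' e'_dvdn]; try exact/fg.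
  by move/fg; exact: max_e.
by move/fg; exact: max_e.
Qed.

Lemma qscale_ratioE (L : fieldType) (q n : nat) (a b : 'I_n -> L) (lam mu : L) :
    lam != 0 -> (forall j, lam * b j = a j * lam ^+ (q ^ j)) ->
  (forall j, mu * b j = a j * mu ^+ (q ^ j)) <->
  (forall j, a j * (mu / lam) ^+ (q ^ j) = a j * (mu / lam)).
Proof.
move=> lam_neq0 qscale; set t := mu / lam.
have -> : mu = t * lam by rewrite divfK.
clearbody t; split=> qscale_t j.
  apply: (mulIf (expf_neq0 (q ^ j) lam_neq0)).
  by rewrite -mulrA -exprMn -qscale_t -mulrA qscale mulrCA mulrA.
by rewrite -mulrA qscale exprMn [RHS]mulrA qscale_t mulrCA mulrA.
Qed.

Lemma max_field_linearity_fixedP (L : finFieldType) (q n e : nat) (a : 'I_n -> L) (t : L) :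
    (1 < q)%N -> (0 < n)%N -> #|L| = (q ^ n)%N ->
    max_field_linearity q n e (qpoly_eval q a) ->
  (forall j, a j * t ^+ (q ^ j) = a j * t) <-> in_Fqe q e t.
Proof.
move=> q_gt1 n_gt0 cardL [_ [f_add f_lin] max_e].
have homP c := qpoly_eval_homogeneousP a c q_gt1 cardL.
split=> [fixt | t_in]; last by apply/homP => x; apply: f_lin.
pose P m := t ^+ (q ^ m) = t.
have Pn : P n by rewrite /P -cardL expf_card.
have P_subn m1 m2 : P m1 -> P m2 -> (m2 <= m1)%N -> P (m1 - m2)%N.
  by move=> Pm1 Pm2 m21; rewrite /P -{1}Pm2 -exprM -expnD subnKC.
have [e' [Pe' e'_dvdn e'_min]] := subn_closed_generator n_gt0 Pn P_subn.
have lin_e' : Fqe_linear q e' (qpoly_eval q a).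
  split=> // c + /eqP c_in; apply/homP => j.
  have [-> | aj_neq0] := eqVneq (a j) 0; first by rewrite !mul0r.
  have /dvdnP [k ->] : (e' %| j)%N by apply/e'_min/(mulfI aj_neq0)/fixt.
  by rewrite expr_qexp_fixed_mul.
have /dvdnP [k ->] := max_e e' e'_dvdn lin_e'.
by apply/eqP; rewrite expr_qexp_fixed_mul.
Qed.

Theorem mainTheorem9 (L : finFieldType) (q n : nat) (a b : 'I_n -> L) :
  (1 < q)%N -> (0 < n)%N -> #|L| = (q ^ n)%N ->
  diag_similar (dickson q a) (dickson q b) ->
  [/\ exists2 lam : L, lam != 0 &
        dickson q b = invmx (qdiag q n lam) *m dickson q a *m qdiag q n lam,
      forall lam : L, lam != 0 ->
        dickson q b = invmx (qdiag q n lam) *m dickson q a *m qdiag q n lam ->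
        forall x : L, qpoly_eval q b x = lam^-1 * qpoly_eval q a (lam * x),
      forall e : nat,
        max_field_linearity q n e (qpoly_eval q a) <->
        max_field_linearity q n e (qpoly_eval q b) &
      forall e : nat, max_field_linearity q n e (qpoly_eval q a) ->
      forall lam mu : L, lam != 0 -> mu != 0 ->
        dickson q b = invmx (qdiag q n lam) *m dickson q a *m qdiag q n lam ->
        (dickson q b = invmx (qdiag q n mu) *m dickson q a *m qdiag q n mu
         <-> in_Fqe q e (mu / lam))].
Proof.
move=> q_gt1 n_gt0 cardL similar_ab.
have conjE := dickson_qdiag_conjE a b n_gt0 cardL.
have [lam0 lam0_neq0 qscale0] :=
  diag_similar_dickson_qscale (ltnW q_gt1) n_gt0 cardL similar_ab.
split.
- by exists lam0; rewrite // conjE.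
- by move=> lam lam_neq0 /(conjE _ lam_neq0); apply: qpoly_eval_qscale.
- move=> e; apply: max_field_linearity_ext => e'.
  exact: Fqe_linear_conjE lam0_neq0 (qpoly_eval_qscale lam0_neq0 qscale0).
move=> e max_e lam mu lam_neq0 mu_neq0 /(conjE _ lam_neq0) qscale.
rewrite conjE // (qscale_ratioE _ lam_neq0 qscale).
exact: max_field_linearity_fixedP q_gt1 n_gt0 cardL max_e.
Qed.
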